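(* Consider the dynamical system $X(t+1)=\operatorname{diag}(|X(t)|\mathbf{1}_n)^{-1}X(t)X(t)^{\top}$ on the domain $\mathcal{S}_{\mathrm{nz\text{-}row}}$, i.e., the map $f_{\mathrm{HbM}}(X)=\operatorname{diag}(|X|\mathbf{1}_n)^{-1}XX^{\top}$. Define $Q_{\mathrm{HbM}}$ as the set of matrices $PYP^{\top}\in\mathcal{S}_{\mathrm{nz\text{-}row}}$ where $P$ is an $n\times n$ permutation matrix and $Y$ is a block diagonal matrix each of whose diagonal blocks has the form $\alpha bb^{\top}$ with $\alpha>0$ and $b\in\{-1,+1\}^m$, $m\le n$ (different blocks may have different $\alpha$, $b$, $m$, with block sizes summing to $n$). Then: (i) $Q_{\mathrm{HbM}}$ is the set of all fixed points of $f_{\mathrm{HbM}}$ in $\mathcal{S}_{\mathrm{nz\text{-}row}}$; (ii) for every $X\in Q_{\mathrm{HbM}}$, $G(X)$ is composed of isolated complete subgraphs that satisfy social balance, i.e., there is a partition of $\{1,\dots,n\}$ into sets $V_1,\dots,V_K$ such that $X_{ij}=0$ whenever $i,j$ lie in different sets, and for each $k$ the principal submatrix of $X$ indexed by $V_k$ has all entries non-zero and its graph satisfies social balance.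
   Context: $\mathcal{S}_{\mathrm{nz\text{-}row}}=\{X\in\mathbb{R}^{n\times n}: \text{every row of }X\text{ is non-zero}\}$. $|X|$ is the entry-wise absolute value and $\mathbf{1}_n$ the all-ones vector. $G(X)$ is the weighted digraph with (possibly negative) adjacency matrix $X$. For a square matrix $Z$, $G(Z)$ satisfies social balance if (S1) $Z_{ii}>0$ for all $i$ and (S2) $\operatorname{sign}(Z_{ij})\operatorname{sign}(Z_{jk})\operatorname{sign}(Z_{ki})=1$ for all indices $i,j,k$, where $\operatorname{sign}$ is the sign function. *)

From mathcomp Require Import all_boot all_order all_fingroup all_algebra.
From mathcomp Require Import all_reals.
Set Implicit Arguments. Unset Strict Implicit. Unset Printing Implicit Defensive.
Import Order.TTheory GRing.Theory Num.Theory.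
Local Open Scope ring_scope.

Definition in_S_nzrow (R : realType) (n : nat) (X : 'M[R]_n) : Prop :=
  forall i : 'I_n, row i X != 0.

Definition absmx (R : realType) (n : nat) (X : 'M[R]_n) : 'M[R]_n :=
  map_mx (fun x => `|x|) X.

Definition ones (R : realType) (n : nat) : 'cV[R]_n := const_mx 1.

Definition f_HbM (R : realType) (n : nat) (X : 'M[R]_n) : 'M[R]_n :=
  invmx (diag_mx (absmx X *m ones R n)^T) *m X *m X^T.

Definition pm1_vec (R : realType) (m : nat) (b : 'cV[R]_m) : Prop :=
  forall j : 'I_m, b j 0 = 1 \/ b j 0 = -1.

Definition Q_HbM (R : realType) (n : nat) (X : 'M[R]_n) : Prop :=
  in_S_nzrow X /\
  exists (s : 'S_n) (K : nat) (m : 'I_K -> nat)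
         (E : (\sum_(k < K) m k)%N = n)
         (alpha : 'I_K -> R) (b : forall k : 'I_K, 'cV[R]_(m k)),
    (forall k, 0 < alpha k) /\ (forall k, pm1_vec (b k)) /\
    X = perm_mx s *m
          castmx (E, E) (\mxdiag_(k < K) (alpha k *: (b k *m (b k)^T)))
        *m (perm_mx s)^T.

Definition social_balance (R : realType) (m : nat) (Z : 'M[R]_m) : Prop :=
  (forall i, 0 < Z i i) /\
  (forall i j k, Num.sg (Z i j) * Num.sg (Z j k) * Num.sg (Z k i) = 1).

Definition principal_submx (R : realType) (n : nat) (X : 'M[R]_n)
  (B : {set 'I_n}) : 'M[R]_#|B| :=
  \matrix_(i < #|B|, j < #|B|) X (enum_val i) (enum_val j).

Definition isolated_balanced_cliques (R : realType) (n : nat) (X : 'M[R]_n)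
  : Prop :=
  exists P : {set {set 'I_n}},
    partition P [set: 'I_n] /\
    (forall i j : 'I_n, pblock P i != pblock P j -> X i j = 0) /\
    (forall B, B \in P ->
       (forall i j, principal_submx X B i j != 0) /\
       social_balance (principal_submx X B)).

From mathcomp Require Import all_boot all_order all_fingroup all_algebra.
From mathcomp Require Import all_reals.
From mathcomp Require Import ring.
Import Order.TTheory GRing.Theory Num.Theory Num.Def.
Set Implicit Arguments. Unset Strict Implicit. Unset Printing Implicit Defensive.
Local Open Scope ring_scope.

(* At a fixed point X X^T = D X with D = diag(|X| 1), so the Gram matrix
   Z = X X^T satisfies sum_j |Z_ij| = d_i^2 and sum_j Z_ij^2 = d_i^2 Z_ii.
   Using the symmetry of Z this gives
     sum_{i,j} |Z_ij| (Z_ii + Z_jj - 2 |Z_ij|) = 0,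
   a sum of nonnegative terms since
     sum_l (X_il - sg(Z_ij) X_jl)^2 <= Z_ii + Z_jj - 2 |Z_ij|.
   Hence X_ij <> 0 forces row i = sg(X_ij) row j; X is then symmetric with a
   positive diagonal, and "X_ij <> 0" is an equivalence relation whose classes
   carry the blocks alpha b b^T.  Conversely these block matrices are fixed
   points by direct computation, and sorting the indices by class yields the
   permutation of Q_HbM. *)

Lemma row_neq0_entry (R : nmodType) m n (X : 'M[R]_(m, n)) i :
  row i X != 0 -> exists j, X i j != 0.
Proof.
move=> Xi; apply/existsP; apply: contraNT Xi => /existsPn Xi0.
by apply/eqP/rowP => j; rewrite !mxE; apply/eqP/negPn/Xi0.
Qed.

Lemma psumr_gt0 (R : numDomainType) (I : finType) (F : I -> R) j :
  (forall i, 0 <= F i) -> 0 < F j -> 0 < \sum_i F i.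
Proof.
by move=> F_ge0 Fj; rewrite (bigD1 j) //= ltr_pwDl // sumr_ge0.
Qed.
Arguments psumr_gt0 {R I F} j.

Section PlusMinusOne.
Variables (R : numDomainType) (x : R).
Hypothesis x_pm1 : x = 1 \/ x = -1.

Lemma pm1_mul_self : x * x = 1.
Proof. by case: x_pm1 => ->; rewrite ?mulrNN mulr1. Qed.

Lemma pm1_norm : `|x| = 1.
Proof. by case: x_pm1 => ->; rewrite ?normrN normr1. Qed.

Lemma pm1_sgr : sgr x = x.
Proof. by case: x_pm1 => ->; rewrite ?sgr1 ?sgrN1. Qed.

Lemma pm1_neq0 : x != 0.
Proof. by rewrite -normr_eq0 pm1_norm oner_eq0. Qed.

End PlusMinusOne.

Lemma pm1M (R : numDomainType) (x y : R) :
  x = 1 \/ x = -1 -> y = 1 \/ y = -1 -> x * y = 1 \/ x * y = -1.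
Proof.
by case=> ->; case=> ->; rewrite ?mulr1 ?mulrN1 ?mulN1r ?opprK; by [left|right].
Qed.

Lemma sgr_pm1 (R : realDomainType) (x : R) : x != 0 -> sgr x = 1 \/ sgr x = -1.
Proof.
move=> x_neq0; case: (ltrgtP x 0) => [/ltr0_sg|/gtr0_sg|x0]; [by right|by left|].
by rewrite x0 eqxx in x_neq0.
Qed.

Section Gram.
Variables (R : realDomainType) (m n : nat) (X : 'M[R]_(m, n)).
Local Notation Z := (X *m X^T).

Lemma gramE i j : Z i j = \sum_l X i l * X j l.
Proof. by rewrite mxE; apply: eq_bigr => l _; rewrite mxE. Qed.

Lemma gram_sym i j : Z i j = Z j i.
Proof. by rewrite !gramE; apply: eq_bigr => l _; rewrite mulrC. Qed.

Lemma gram_ge0 i : 0 <= Z i i.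
Proof. by rewrite gramE sumr_ge0 // => l _; rewrite -expr2 sqr_ge0. Qed.

Lemma gram_gt0 i : row i X != 0 -> 0 < Z i i.
Proof.
case/row_neq0_entry=> j Xij; rewrite gramE (psumr_gt0 j) => [//|l|].
  by rewrite -expr2 sqr_ge0.
by rewrite -expr2 lt0r sqrf_eq0 Xij sqr_ge0.
Qed.

Lemma sum_sqr_sub_sg_le i j :
  \sum_l (X i l - sgr (Z i j) * X j l) ^+ 2 <= Z i i + Z j j - 2 * `|Z i j|.
Proof.
have -> : \sum_l (X i l - sgr (Z i j) * X j l) ^+ 2 =
          Z i i + sgr (Z i j) ^+ 2 * Z j j - 2 * (sgr (Z i j) * Z i j).
  rewrite !gramE !mulr_sumr -big_split -sumrB /=.
  by apply: eq_bigr => l _; ring.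
rewrite -normrEsg lerD2r lerD2l sqr_sg.
by case: (_ != 0); rewrite ?mul1r ?mul0r ?gram_ge0.
Qed.

Lemma gram_norm_le i j : 2 * `|Z i j| <= Z i i + Z j j.
Proof.
rewrite -subr_ge0 (le_trans _ (sum_sqr_sub_sg_le i j)) //.
by rewrite sumr_ge0 // => l _; exact: sqr_ge0.
Qed.

Lemma gram_norm_eq_row i j :
  Z i i + Z j j = 2 * `|Z i j| -> forall l, X i l = sgr (Z i j) * X j l.
Proof.
move=> eqZ.
have sum0 : \sum_l (X i l - sgr (Z i j) * X j l) ^+ 2 = 0.
  apply/eqP; rewrite eq_le sumr_ge0 ?andbT => [|l _]; last exact: sqr_ge0.
  by have := sum_sqr_sub_sg_le i j; rewrite eqZ subrr.
move=> l; apply/eqP; rewrite -subr_eq0 -sqrf_eq0; apply/eqP.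
exact: (psumr_eq0P (fun k _ => sqr_ge0 _) sum0).
Qed.

End Gram.

Definition abs_rowsum (R : numDomainType) m n (X : 'M[R]_(m, n)) i :=
  \sum_j `|X i j|.

Lemma abs_rowsum_ge0 (R : numDomainType) m n (X : 'M[R]_(m, n)) i :
  0 <= abs_rowsum X i.
Proof. exact: sumr_ge0. Qed.

Lemma abs_rowsum_gt0 (R : numDomainType) m n (X : 'M[R]_(m, n)) i j :
  X i j != 0 -> 0 < abs_rowsum X i.
Proof. by move=> Xij; rewrite (psumr_gt0 j) ?normr_gt0. Qed.

Section GramFixedPoint.
Variables (R : realDomainType) (n : nat) (X : 'M[R]_n).
Local Notation Z := (X *m X^T).
Local Notation d := (abs_rowsum X).
Hypothesis gram_fixed : forall i j, Z i j = d i * X i j.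

Lemma fixed_sum_sqr_gram i : \sum_j Z i j ^+ 2 = d i ^+ 2 * Z i i.
Proof.
rewrite [in RHS]gramE mulr_sumr; apply: eq_bigr => j _.
by rewrite gram_fixed; ring.
Qed.

Lemma fixed_sum_norm_gram i : \sum_j `|Z i j| = d i ^+ 2.
Proof.
rewrite expr2 {2}/abs_rowsum mulr_sumr; apply: eq_bigr => j _.
by rewrite gram_fixed normrM ger0_norm ?abs_rowsum_ge0.
Qed.

Lemma fixed_gram_defect_sum :
  \sum_i \sum_j `|Z i j| * (Z i i + Z j j - 2 * `|Z i j|) = 0.
Proof.
have swap : \sum_i \sum_j `|Z i j| * Z j j = \sum_i \sum_j `|Z i j| * Z i i.
  rewrite exchange_big; apply: eq_bigr => i _; apply: eq_bigr => j _.
  by rewrite (gram_sym X j i).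
have diag : \sum_i \sum_j `|Z i j| * Z i i = \sum_i \sum_j Z i j ^+ 2.
  apply: eq_bigr => i _.
  by rewrite -mulr_suml fixed_sum_norm_gram fixed_sum_sqr_gram.
have expand i j : `|Z i j| * (Z i i + Z j j - 2 * `|Z i j|) =
    `|Z i j| * Z i i + `|Z i j| * Z j j - 2 * Z i j ^+ 2.
  by rewrite -real_normK ?num_real; ring.
under eq_bigr do under eq_bigr do rewrite expand.
under eq_bigr do rewrite sumrB big_split -mulr_sumr /=.
by rewrite sumrB big_split -mulr_sumr /= swap diag; ring.
Qed.

Lemma fixed_gram_norm_eq i j : Z i j != 0 -> Z i i + Z j j = 2 * `|Z i j|.
Proof.
move=> Zij.
have defect_ge0 k l : 0 <= `|Z k l| * (Z k k + Z l l - 2 * `|Z k l|).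
  by rewrite mulr_ge0 ?subr_ge0 ?gram_norm_le.
have row_i : \sum_l `|Z i l| * (Z i i + Z l l - 2 * `|Z i l|) = 0.
  by apply: (psumr_eq0P _ fixed_gram_defect_sum) => // k _; exact: sumr_ge0.
have /eqP := psumr_eq0P (fun l _ => defect_ge0 i l) row_i (i := j) isT.
by rewrite mulf_eq0 normr_eq0 (negbTE Zij) subr_eq0 => /eqP.
Qed.

Lemma fixed_row_sg i j : X i j != 0 -> forall l, X i l = sgr (X i j) * X j l.
Proof.
move=> Xij; have di_gt0 := abs_rowsum_gt0 Xij.
have Zij : Z i j != 0 by rewrite gram_fixed mulf_neq0 // lt0r_neq0.
have -> : sgr (X i j) = sgr (Z i j) by rewrite gram_fixed sgrM (gtr0_sg di_gt0) mul1r.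
exact/gram_norm_eq_row/fixed_gram_norm_eq.
Qed.

Lemma fixed_abs_rowsum_eq i j : X i j != 0 -> d i = d j.
Proof.
move=> Xij; apply: eq_bigr => l _.
by rewrite (fixed_row_sg Xij) normrM normr_sg Xij mul1r.
Qed.

Lemma fixed_sym i j : X j i = X i j.
Proof.
wlog Xij : i j / X i j != 0.
  move=> sym; have [Xij0|] := eqVneq (X i j) 0; last exact: sym.
  by have [-> //|/sym] := eqVneq (X j i) 0.
have dj_gt0 : 0 < d j by rewrite -(fixed_abs_rowsum_eq Xij) (abs_rowsum_gt0 Xij).
have := gram_fixed i j; rewrite gram_sym gram_fixed (fixed_abs_rowsum_eq Xij).
exact/mulfI/lt0r_neq0.
Qed.

Lemma fixed_diag_gt0 i : row i X != 0 -> 0 < X i i.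
Proof.
move=> Xi; have := gram_gt0 Xi; rewrite gram_fixed.
have [j Xij] := row_neq0_entry Xi.
by rewrite pmulr_rgt0 // (abs_rowsum_gt0 Xij).
Qed.

End GramFixedPoint.

(* Entrywise form of P Y P^T: g i is the block of i, s i the entry of b at i
   and a k the weight alpha of block k. *)
Definition signed_block_form (R : numDomainType) n (X : 'M[R]_n) : Prop :=
  exists K (g : 'I_n -> 'I_K) (s : 'I_n -> R) (a : 'I_K -> R),
    [/\ forall i, s i = 1 \/ s i = -1, forall k, 0 < a k &
        forall i j, X i j = if g i == g j then a (g i) * (s i * s j) else 0].

Lemma signed_block_form_of_rows (R : realDomainType) n (X : 'M[R]_n) :
    (forall i j, X j i = X i j) -> (forall i, 0 < X i i) ->
    (forall i j, X i j != 0 -> forall l, X i l = sgr (X i j) * X j l) ->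
  signed_block_form X.
Proof.
move=> Xsym Xdiag Xrow.
have Xii i : X i i != 0 by rewrite lt0r_neq0.
(* The picked index depends only on the support of row i, which is constant
   on a class: g chooses one representative per class. *)
pose g i := odflt i [pick l | X i l != 0].
have g_link i : X i (g i) != 0.
  by rewrite /g; case: pickP => [l ->//|/(_ i)]; rewrite /= Xii.
have g_eq i j : (g i == g j) = (X i j != 0).
  apply/eqP/idP => [gij | Xij].
    rewrite (Xrow i (g i) (g_link i)) mulf_neq0 ?sgr_eq0 ?g_link //.
    by rewrite gij Xsym g_link.
  rewrite /g (@eq_pick _ _ [pred l | X j l != 0]) => [|l /=]; last first.
    by rewrite (Xrow i j Xij) mulf_eq0 sgr_eq0 (negbTE Xij).
  by case: pickP => [//|/(_ j)]; rewrite /= Xii.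
pose s i := sgr (X (g i) i).
have s_pm1 i : s i = 1 \/ s i = -1 by apply: sgr_pm1; rewrite Xsym g_link.
exists n, g, s, (fun k => X k k); split=> // i j.
rewrite g_eq; case: ifPn => [Xij | /negPn/eqP //].
have gj : g j = g i by apply/eqP; rewrite g_eq Xsym.
have Xi l : X i l = s i * X (g i) l.
  by rewrite (Xrow (g i) i) ?mulrA ?pm1_mul_self ?mul1r // Xsym g_link.
have Xgj : X (g i) j = s j * X (g i) (g i).
  rewrite -gj Xsym (Xrow j (g j) (g_link j)); congr (_ * _).
  by rewrite /s Xsym.
by rewrite Xi Xgj mulrA mulrC.
Qed.

Lemma f_HbM_fixedP (R : realType) n (X : 'M[R]_n) : in_S_nzrow X ->
  f_HbM X = X <-> forall i j, (X *m X^T) i j = abs_rowsum X i * X i j.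
Proof.
move=> Xnz; rewrite /f_HbM -mulmxA.
have rowsumE : (absmx X *m ones R n)^T = \row_i abs_rowsum X i.
  by apply/rowP => i; rewrite !mxE; apply: eq_bigr => j _; rewrite !mxE mulr1.
set D := diag_mx _; have D_unit : D \in unitmx.
  rewrite unitmxE det_diag unitfE; apply/prodf_neq0 => i _.
  have [j Xij] := row_neq0_entry (Xnz i).
  by rewrite rowsumE mxE lt0r_neq0 // (abs_rowsum_gt0 Xij).
have fixE : X *m X^T = D *m X <-> forall i j, (X *m X^T) i j = abs_rowsum X i * X i j.
  rewrite mul_diag_mx rowsumE; split=> [-> i j | XE]; first by rewrite !mxE.
  by apply/matrixP => i j; rewrite XE !mxE.
rewrite -fixE; split=> [/(congr1 (mulmx D)) | ->]; last by rewrite mulKmx.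
by rewrite mulKVmx.
Qed.

Lemma fixed_signed_block_form (R : realType) n (X : 'M[R]_n) :
  in_S_nzrow X -> f_HbM X = X -> signed_block_form X.
Proof.
move=> Xnz /(f_HbM_fixedP Xnz) Xfix.
apply: signed_block_form_of_rows; first exact: fixed_sym.
  by move=> i; exact: fixed_diag_gt0.
exact: fixed_row_sg.
Qed.

Lemma eq_preim_pblock (T : finType) (rT : eqType) (g : T -> rT) x y :
  (pblock (preim_partition g [set: T]) x == pblock (preim_partition g [set: T]) y)
  = (g x == g y).
Proof.
have [/eqP cover_P triv_P _] := and3P (preim_partitionP g [set: T]).
rewrite eq_pblock // ?cover_P ?inE // pblock_equivalence_partition ?inE //.
by move=> u v w _ _ _; split=> // /eqP ->.
Qed.

Lemma signed_block_form_nzrow (R : realType) n (X : 'M[R]_n) :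
  signed_block_form X -> in_S_nzrow X.
Proof.
case=> K [g [s [a [s_pm1 a_gt0 XE]]]] i.
apply: contraTneq (a_gt0 (g i)) => /rowP /(_ i).
by rewrite !mxE XE eqxx pm1_mul_self // mulr1 => ->; rewrite ltxx.
Qed.

Lemma signed_block_form_fixed (R : realType) n (X : 'M[R]_n) :
  signed_block_form X -> f_HbM X = X.
Proof.
move=> FX; apply/(f_HbM_fixedP (signed_block_form_nzrow FX)) => i j.
case: FX => K [g [s [a [s_pm1 a_gt0 XE]]]].
have normXE l : `|X i l| = (g l == g i)%:R * a (g i).
  rewrite XE eq_sym; case: eqP => _; last by rewrite normr0 mul0r.
  by rewrite mul1r !normrM (pm1_norm (s_pm1 i)) (pm1_norm (s_pm1 l)) !mulr1 gtr0_norm.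
have gramXE l : X i l * X j l = (g l == g i)%:R * (a (g i) * X i j).
  rewrite !XE [g i == g l]eq_sym [g j == g l]eq_sym.
  case: (eqVneq (g l) (g i)) => [gli | _]; last by rewrite !mul0r.
  rewrite gli eq_sym mul1r; case: eqP => [<- | _]; last by rewrite !mulr0.
  rewrite -[RHS]mulr1 -(pm1_mul_self (s_pm1 l)); ring.
rewrite gramE /abs_rowsum (eq_bigr _ (fun l _ => gramXE l)).
by rewrite (eq_bigr _ (fun l _ => normXE l)) -!mulr_suml mulrA.
Qed.

Lemma signed_block_form_cliques (R : realType) n (X : 'M[R]_n) :
  signed_block_form X -> isolated_balanced_cliques X.
Proof.
case=> K [g [s [a [s_pm1 a_gt0 XE]]]].
pose P := preim_partition g [set: 'I_n].
have P_part : partition P [set: 'I_n] := preim_partitionP g _.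
have [_ triv_P _] := and3P P_part.
have g_block B x y : B \in P -> x \in B -> y \in B -> g x = g y.
  move=> PB xB yB; apply/eqP; rewrite -eq_preim_pblock.
  by rewrite (def_pblock triv_P PB xB) (def_pblock triv_P PB yB).
exists P; split=> //; split=> [i j | B PB].
  by rewrite XE eq_preim_pblock => /negbTE ->.
have subE i j : principal_submx X B i j =
    a (g (enum_val i)) * (s (enum_val i) * s (enum_val j)).
  by rewrite mxE XE (g_block B (enum_val i) (enum_val j)) ?enum_valP ?eqxx.
split=> [i j | ].
  by rewrite subE; apply: mulf_neq0; [exact: lt0r_neq0 | exact/pm1_neq0/pm1M].
split=> [i | i j k]; first by rewrite subE pm1_mul_self ?s_pm1 // mulr1.
rewrite !subE !sgrM !(gtr0_sg (a_gt0 _)) !mul1r !pm1_sgr ?s_pm1 //.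
have := pm1M (pm1M (s_pm1 (enum_val i)) (s_pm1 (enum_val j))) (s_pm1 (enum_val k)).
by move/pm1_mul_self <-; ring.
Qed.

Lemma perm_mx_conjE (R : pzRingType) n (s : 'S_n) (Y : 'M[R]_n) i j :
  (perm_mx s *m Y *m (perm_mx s)^T) i j = Y (s i) (s j).
Proof. by rewrite tr_perm_mx -col_permE -row_permE !mxE. Qed.

Lemma mxdiag_outerE (R : comPzRingType) K (m : 'I_K -> nat) (a : 'I_K -> R)
    (b : forall k, 'cV[R]_(m k)) p q :
  (\mxdiag_(k < K) (a k *: (b k *m (b k)^T))) p q =
  if tagnat.sig1 p == tagnat.sig1 q then
    a (tagnat.sig1 p) * (b _ (tagnat.sig2 p) 0 * b _ (tagnat.sig2 q) 0)
  else 0.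
Proof.
rewrite /mxdiag mxE; move: (tagnat.sig2 p) (tagnat.sig2 q).
move: (tagnat.sig1 p) (tagnat.sig1 q) => k l.
have [<- x y | kl x y] := eqVneq k l; last by rewrite mxE.
by rewrite conform_mx_id !mxE big_ord1 !mxE.
Qed.

Lemma Q_HbM_signed_block_form (R : realType) n (X : 'M[R]_n) :
  Q_HbM X -> signed_block_form X.
Proof.
case=> _ [s [K [m [E [a [b [a_gt0 [b_pm1 ->]]]]]]]].
pose p i := cast_ord (esym E) (s i).
exists K, (fun i => tagnat.sig1 (p i)), (fun i => b _ (tagnat.sig2 (p i)) 0), a.
split=> // [i | i j]; first exact: b_pm1.
by rewrite perm_mx_conjE castmxE mxdiag_outerE.
Qed.

Section FiberRank.
Variables (n K : nat) (g : 'I_n -> 'I_K).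

Lemma sum_card_fibers : (\sum_k #|g @^-1: [set k]|)%N = n.
Proof.
rewrite -[RHS]card_ord -sum1_card (partition_big g predT) //=.
by apply: eq_bigr => k _; rewrite sum1dep_card; apply: eq_card => i; rewrite !inE.
Qed.

Lemma mem_fiber i : i \in g @^-1: [set g i].
Proof. by rewrite !inE. Qed.

(* The position of i after sorting the indices by block. *)
Definition fiber_rank i : 'I_(\sum_k #|g @^-1: [set k]|) :=
  @tagnat.Rank _ (fun k => #|g @^-1: [set k]|) (g i) (enum_rank_in (mem_fiber i) i).

Lemma fiber_rank1 i : tagnat.sig1 (fiber_rank i) = g i.
Proof. exact: tagnat.Rank1K. Qed.

Lemma fiber_rank2 i : enum_val (tagnat.sig2 (fiber_rank i)) = i.
Proof.
rewrite /tagnat.sig2 /tagnat.sig1 /fiber_rank /tagnat.Rank tagnat.rankK /=.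
by rewrite enum_rankK_in ?mem_fiber.
Qed.

Lemma fiber_rank_inj : injective fiber_rank.
Proof. by move=> i j eq_ij; rewrite -(fiber_rank2 i) -(fiber_rank2 j) eq_ij. Qed.

End FiberRank.

Lemma signed_block_form_Q_HbM (R : realType) n (X : 'M[R]_n) :
  signed_block_form X -> Q_HbM X.
Proof.
move=> FX; split; first exact: signed_block_form_nzrow.
case: FX => K [g [s [a [s_pm1 a_gt0 XE]]]].
pose E := sum_card_fibers g.
have p_inj : injective (fun i => cast_ord E (fiber_rank g i)).
  by move=> i j /cast_ord_inj /fiber_rank_inj.
exists (perm p_inj), K, (fun k => #|g @^-1: [set k]|), E, a.
exists (fun k => \col_x s (enum_val x)); split=> //; split=> [k x |].
  by rewrite mxE; exact: s_pm1.
apply/matrixP => i j; rewrite perm_mx_conjE castmxE mxdiag_outerE !permE /=.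
by rewrite !cast_ordK !mxE !fiber_rank2 !fiber_rank1 XE.
Qed.

Theorem theorem3p4 (R : realType) (n : nat) :
  (forall X : 'M[R]_n, (in_S_nzrow X /\ f_HbM X = X) <-> Q_HbM X) /\
  (forall X : 'M[R]_n, Q_HbM X -> isolated_balanced_cliques X).
Proof.
split=> [X | X /Q_HbM_signed_block_form]; last exact: signed_block_form_cliques.
split=> [[Xnz Xfix] | /Q_HbM_signed_block_form FX].
  exact/signed_block_form_Q_HbM/fixed_signed_block_form.
by split; [exact: signed_block_form_nzrow | exact: signed_block_form_fixed].
Qed.
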